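(* Let $\mathbb{K}$ be a finite reduced formal context. Then $\mathcal{CDB}(BC(\mathbb{K}))=\{A\to A^{\bullet}\mid A\to A^{\bullet}\in\mathcal{CDB}(\mathbb{K})\text{ and }|A|=1\}$, i.e. the canonical direct basis of the Birkhoff completion of $\mathbb{K}$ consists exactly of the implications of the canonical direct basis of $\mathbb{K}$ whose premise is a singleton.
   Context: For a formal context $(G,M,I)$, derivation: $A'=\{m\in M\mid\forall g\in A:(g,m)\in I\}$, $B'=\{g\in G\mid\forall m\in B:(g,m)\in I\}$. A context is reduced if no object $g$ has $\{g\}'=X'$ for some $X\subseteq G$ with $g\notin X$, and no attribute $m$ has $\{m\}'=X'$ for some $X\subseteq M$ with $m\notin X$. For $A\subseteq M$, $A^{\bullet}:=A''\setminus\big(A\cup\bigcup_{n\in A}(A\setminus\{n\})''\big)$; $A$ is a proper premise if $A^{\bullet}\ne\emptyset$. The canonical direct basis $\mathcal{CDB}(\mathbb{K})$ is the set of implications $A\to A^{\bullet}$ for all proper premises $A$ of $\mathbb{K}$ (with $A^\bullet$ computed in that context). For $m,n\in M$, $m\ge_{\mathbb{K}}n$ iff $\{m\}'\supseteq\{n\}'$. Let $\mathcal{M}(M)$ be the set of attributes whose attribute concept $(\{m\}',\{m\}'')$ is meet-irreducible in the concept lattice, and $\overline{\mathcal{M}(M)}=\{\overline m\mid m\in\mathcal{M}(M)\}$ new elements. The Birkhoff completion is $BC(\mathbb{K}):=\big(G\cup\overline{\mathcal{M}(M)},M,I\cup\{(\overline m,n)\in\overline{\mathcal{M}(M)}\times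 M\mid m\not\ge_{\mathbb{K}}n\}\big)$. *)

From mathcomp Require Import all_boot.
Set Implicit Arguments. Unset Strict Implicit. Unset Printing Implicit Defensive.

Section FCA.
Variables (G M : finType) (I : G -> M -> bool).

Definition intent (A : {set G}) : {set M} := [set m | [forall g in A, I g m]].
Definition extent (B : {set M}) : {set G} := [set g | [forall m in B, I g m]].
Definition closure (B : {set M}) : {set M} := intent (extent B).

Definition reduced : Prop :=
  (forall (g : G) (X : {set G}), g \notin X -> intent [set g] <> intent X) /\
  (forall (m : M) (X : {set M}), m \notin X -> extent [set m] <> extent X).

Definition bullet (A : {set M}) : {set M} :=
  closure A :\: (A :|: \bigcup_(n in A) closure (A :\ n)).
Definition proper_premise (A : {set M}) : bool := bullet A != set0.

(* canonical direct basis: the set of implications A -> A^bullet *)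
Definition CDB : {set {set M} * {set M}} :=
  [set (A, bullet A) | A in [set A | proper_premise A]].

Definition attr_ge (m n : M) : bool := extent [set n] \subset extent [set m].

(* concept lattice: concepts (E,B) with E' = B, B' = E, ordered by extents *)
Definition is_concept (c : {set G} * {set M}) : bool :=
  (intent c.1 == c.2) && (extent c.2 == c.1).
Definition concept_top : {set G} * {set M} := (setT, intent setT).
Definition concept_meet (c d : {set G} * {set M}) : {set G} * {set M} :=
  (c.1 :&: d.1, intent (c.1 :&: d.1)).
Definition meet_irreducible (c : {set G} * {set M}) : bool :=
  (c != concept_top) &&
  [forall c1, forall c2,
     (is_concept c1 && is_concept c2 && (c == concept_meet c1 c2))
       ==> ((c == c1) || (c == c2))].
Definition attr_concept (m : M) : {set G} * {set M} :=
  (extent [set m], closure [set m]).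
Definition attr_mi (m : M) : bool := meet_irreducible (attr_concept m).

(* Birkhoff completion: new objects \overline m for m in M(M) *)
Definition bc_obj : finType := (G + {m : M | attr_mi m})%type.
Definition bc_rel (x : bc_obj) (n : M) : bool :=
  match x with
  | inl g => I g n
  | inr m => ~~ attr_ge (val m) n
  end.

End FCA.

From Pilot Require Import Defs.
From mathcomp Require Import all_boot.
Set Implicit Arguments. Unset Strict Implicit. Unset Printing Implicit Defensive.

(* In a context reduced on attributes every attribute concept is
   meet-irreducible, so the Birkhoff completion adds an object [\overline m]
   for every attribute [m]; these objects cut every closure down to the union
   of the closures of its singletons.  For such an additive closure operator,
   a premise with two or more elements [a], [b] is never proper: whatever
   follows from [a] already follows from [A :\ b].  Singleton premises have the
   same closure, hence the same consequences, in both contexts. *)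

Section Derivation.
Variables (G M : finType) (I : G -> M -> bool).

Lemma extent1 g m : (g \in extent I [set m]) = I g m.
Proof.
rewrite inE; apply/forall_inP/idP => [-> // | Igm x]; first exact: set11.
by move/set1P ->.
Qed.

Lemma extent0 : extent I set0 = setT.
Proof. by apply/setP => g; rewrite !inE; apply/forall_inP => m; rewrite inE. Qed.

Lemma extentS (B C : {set M}) : B \subset C -> extent I C \subset extent I B.
Proof.
move/subsetP=> sBC; apply/subsetP => g; rewrite !inE => /forall_inP IgC.
by apply/forall_inP => m /sBC; apply: IgC.
Qed.

Lemma extentU (B C : {set M}) : extent I (B :|: C) = extent I B :&: extent I C.
Proof.
apply/setP => g; rewrite !inE; apply/forall_inP/andP => [IgBC | [IgB IgC] m].
  by split; apply/forall_inP => m Hm; apply: IgBC; rewrite inE Hm ?orbT.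
by case/setUP; [move: IgB | move: IgC] => /forall_inP; apply.
Qed.

Lemma mem_closure1 b n : (n \in Defs.closure I [set b]) = attr_ge I n b.
Proof.
rewrite inE; apply/forall_inP/subsetP => [Ibn g gb | sbn g /sbn].
  by rewrite extent1 Ibn.
by rewrite extent1.
Qed.

Lemma bullet1 a :
  Defs.closure I set0 = set0 -> bullet I [set a] = Defs.closure I [set a] :\ a.
Proof. by move=> cl0; rewrite /bullet big_set1 setDv cl0 setU0. Qed.

Section AdditiveClosure.
Hypothesis closureE :
  forall B, Defs.closure I B = \bigcup_(b in B) Defs.closure I [set b].

Lemma closure0_additive : Defs.closure I set0 = set0.
Proof. by rewrite closureE big_set0. Qed.

Lemma bullet_eq0_additive (A : {set M}) : #|A| != 1 -> bullet I A = set0.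
Proof.
move=> A_n1; have [->|_] := set_0Vmem A.
  by rewrite /bullet closure0_additive set0D.
apply/eqP; rewrite setD_eq0; apply/subsetP => n.
rewrite closureE => /bigcupP [a Aa cl_a_n].
have [b Aab] : exists b, b \in A :\ a.
  apply/set0Pn; apply: contra A_n1 => /eqP A_a.
  by rewrite (cardsD1 a A) Aa A_a cards0.
rewrite !inE; apply/orP; right; apply/bigcupP; exists b; first by case/setD1P: Aab.
rewrite closureE; apply/bigcupP; exists a => //.
by case/setD1P: Aab => b_a _; rewrite !inE eq_sym b_a.
Qed.

End AdditiveClosure.

Section AttributeReduced.
Hypothesis attr_reduced :
  forall (m : M) (X : {set M}), m \notin X -> extent I [set m] <> extent I X.

Lemma closure0_reduced : Defs.closure I set0 = set0.
Proof.
apply/setP => n; rewrite !inE; apply/negbTE/forall_inP => cl0n.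
apply: (attr_reduced (X := set0) (m := n)); first by rewrite inE.
by rewrite extent0; apply/setP => g; rewrite extent1 inE cl0n // extent0.
Qed.

Lemma attr_mi_reduced m : attr_mi I m.
Proof.
apply/andP; split.
  apply/eqP => -[ext_m _]; apply: (attr_reduced (m := m) (X := set0)).
    by rewrite inE.
  by rewrite ext_m extent0.
apply/forallP => c1; apply/forallP => c2; apply/implyP.
case/andP => /andP [/andP [/eqP int1 /eqP ext1] /andP [/eqP int2 /eqP ext2]] /eqP.
case=> ext_m _.
have attr_concept_eq c : intent I c.1 = c.2 -> extent I c.2 = c.1 ->
    m \in c.2 -> extent I [set m] \subset c.1 -> attr_concept I m == c.
  case: c => E B /= intE extB mB sub_mE.
  have ext_mE : extent I [set m] = E.
    by apply/eqP; rewrite eqEsubset sub_mE -extB extentS // sub1set mB.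
  by rewrite /attr_concept /Defs.closure ext_mE intE.
have : m \in c1.2 :|: c2.2.
  by apply/negPn/negP => /attr_reduced; rewrite extentU ext1 ext2.
by case/setUP => mc; apply/orP; [left | right]; apply: attr_concept_eq;
  rewrite // ext_m ?subsetIl ?subsetIr.
Qed.

End AttributeReduced.

End Derivation.

Section BirkhoffCompletion.
Variables (G M : finType) (I : G -> M -> bool).
Hypothesis attr_mi_all : forall m, attr_mi I m.

(* The new object [\overline n] has every attribute except those above [n],
   so it witnesses that [n] is not implied by any set of attributes none of
   which lies below [n]. *)
Lemma closure_bc (B : {set M}) :
  Defs.closure (@bc_rel G M I) B = \bigcup_(b in B) Defs.closure I [set b].
Proof.
apply/setP => n; rewrite inE; apply/forall_inP/bigcupP => [cl_n | [b Bb cl_b_n] x].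
  apply/exists_inP; apply: contraT; rewrite negb_exists_in => /forall_inP n_out.
  have /cl_n : inr (exist _ n (attr_mi_all n)) \in extent (@bc_rel G M I) B.
    by rewrite inE; apply/forall_inP => b /n_out; rewrite mem_closure1.
  by rewrite /= /attr_ge subxx.
rewrite inE => /forall_inP /(_ b Bb); rewrite mem_closure1 in cl_b_n.
case: x => [g | [m _]] /=.
  by move=> Igb; have := subsetP cl_b_n g; rewrite !extent1; apply.
by apply: contra; apply: subset_trans.
Qed.

Lemma closure_bc1 b : Defs.closure (@bc_rel G M I) [set b] = Defs.closure I [set b].
Proof. by rewrite closure_bc big_set1. Qed.

Lemma closure_bc_additive (B : {set M}) :
  Defs.closure (@bc_rel G M I) B =
  \bigcup_(b in B) Defs.closure (@bc_rel G M I) [set b].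
Proof. by rewrite closure_bc; apply: eq_bigr => b _; rewrite closure_bc1. Qed.

Lemma bullet_bc1 a :
  Defs.closure I set0 = set0 -> bullet (@bc_rel G M I) [set a] = bullet I [set a].
Proof.
move=> cl0; rewrite !bullet1 ?closure_bc1 //.
exact/closure0_additive/closure_bc_additive.
Qed.

End BirkhoffCompletion.

Lemma mem_imset_graph (T U : finType) (f : T -> U) (P : {set T}) x y :
  ((x, y) \in [set (z, f z) | z in P]) = (x \in P) && (y == f x).
Proof. by apply/imsetP/andP => [[z Pz [-> ->]] | [Px /eqP ->]]; last exists x. Qed.

Theorem mainTheorem8 (G M : finType) (I : G -> M -> bool) :
  reduced I ->
  CDB (@bc_rel G M I) = [set p in CDB I | #|p.1| == 1].
Proof.
case=> _ attr_reduced; have attr_mi_all := attr_mi_reduced attr_reduced.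
apply/setP => -[A B]; rewrite inE /CDB !mem_imset_graph !inE /proper_premise /=.
have [/cards1P [a ->] | A_n1] := boolP (#|A| == 1).
  by rewrite bullet_bc1 ?closure0_reduced ?andbT.
by rewrite bullet_eq0_additive ?eqxx ?andbF //; apply: closure_bc_additive.
Qed.
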